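(* Fix $\nu>1$ and write $F_{\text{exist}}=\nu(\nu+1)$, $F_{\text{2d}}=\nu(\nu+1)/\sqrt{\nu^2+\nu-1}$. For $\mu_L\ge0$, $k,\eta\in\mathbb{R}$, consider the roots $\lambda$ of $\det\big(G(-\infty;\lambda,\eta)-(ik+\mu_L)I\big)=0$ (the $\mu_L$-weighted dispersion relations at $-\infty$). (i) If $F_{\text{2d}}<F<F_{\text{exist}}$, then for every $\mu_L\ge0$ and every $R>0$ there exist $(k,\eta)$ with $k^2+\eta^2\ge R$ and a root $\lambda$ with $\Re\lambda>0$. (ii) If $2<F<F_{\text{2d}}$ and $$\mu_L\in\Big(\tfrac{F^2}{2}-\tfrac{F^2}{F_{\text{exist}}}-\tfrac{F}{F_{\text{2d}}}\sqrt{F_{\text{2d}}^2-F^2},\ \tfrac{F^2}{2}-\tfrac{F^2}{F_{\text{exist}}}+\tfrac{F}{F_{\text{2d}}}\sqrt{F_{\text{2d}}^2-F^2}\Big),$$ then this interval is contained in $(0,\infty)$, and there exists $R>0$ such that for all real $(k,\eta)$ with $k^2+\eta^2\ge R$ every root $\lambda$ satisfies $\Re\lambda<0$.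
   Context: $G(-\infty;\lambda,\eta)=(E-\lambda I-i\eta A_2)A_1^{-1}$ with, at $(H,Q)=(1,1)$ and $s=\frac{\nu^2+\nu+1}{\nu(\nu+1)}$, $A_1=\begin{pmatrix}-s&1&0\\ H/F^2-Q^2/H^2&2Q/H-s&0\\0&0&Q/H-s\end{pmatrix}$, $A_2=\begin{pmatrix}0&0&1\\0&0&Q/H\\ H/F^2&0&0\end{pmatrix}$, $E=\begin{pmatrix}0&0&0\\ 2Q^2/H^3+1&-2Q/H^2&0\\0&0&-Q/H^2\end{pmatrix}$. This is the limiting matrix at the upstream endstate $(1,1,0)$ of a hydraulic shock of the inviscid Saint-Venant equations with Froude number $F$ and downstream state $(\nu^{-2},\nu^{-3},0)$; $A_1$ is invertible for $F\neq F_{\text{exist}}$. *)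

From HB Require Import structures.
From mathcomp Require Import all_boot all_order all_algebra.
From mathcomp Require Import complex.
From mathcomp Require Import reals.
Set Implicit Arguments. Unset Strict Implicit. Unset Printing Implicit Defensive.
Import Order.TTheory GRing.Theory Num.Theory.
Local Open Scope ring_scope.
Local Open Scope complex_scope.

Section Dispersion.
Variable R : realType.

Definition mx3 (rows : seq (seq R)) : 'M[R]_3 :=
  \matrix_(i < 3, j < 3) nth 0 (nth [::] rows i) j.

Definition s_of (nu : R) : R := (nu ^+ 2 + nu + 1) / (nu * (nu + 1)).

Definition F_exist (nu : R) : R := nu * (nu + 1).
Definition F_2d (nu : R) : R := nu * (nu + 1) / Num.sqrt (nu ^+ 2 + nu - 1).

Definition A1_HQ (nu F H Q : R) : 'M[R]_3 :=
  mx3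
    [:: [:: - s_of nu; 1; 0];
        [:: H / F ^+ 2 - Q ^+ 2 / H ^+ 2; 2 * Q / H - s_of nu; 0];
        [:: 0; 0; Q / H - s_of nu]].

Definition A2_HQ (F H Q : R) : 'M[R]_3 :=
  mx3
    [:: [:: 0; 0; 1];
        [:: 0; 0; Q / H];
        [:: H / F ^+ 2; 0; 0]].

Definition E_HQ (H Q : R) : 'M[R]_3 :=
  mx3
    [:: [:: 0; 0; 0];
        [:: 2 * Q ^+ 2 / H ^+ 3 + 1; - (2 * Q / H ^+ 2); 0];
        [:: 0; 0; - (Q / H ^+ 2)]].

Definition A1 (nu F : R) : 'M[R]_3 := A1_HQ nu F 1 1.
Definition A2 (F : R) : 'M[R]_3 := A2_HQ F 1 1.
Definition E0 : 'M[R]_3 := E_HQ 1 1.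

Definition cmx (M : 'M[R]_3) : 'M[R[i]]_3 := map_mx (fun x => x%:C) M.

Definition Gminf (nu F : R) (lambda : R[i]) (eta : R) : 'M[R[i]]_3 :=
  (cmx E0 - lambda%:M - ('i * eta%:C) *: cmx (A2 F)) *m invmx (cmx (A1 nu F)).

Definition disp_root (nu F muL k eta : R) (lambda : R[i]) : Prop :=
  \det (Gminf nu F lambda eta - ('i * k%:C + muL%:C)%:M) = 0.

End Dispersion.

From HB Require Import structures.
From mathcomp Require Import all_boot all_order all_algebra.
From mathcomp Require Import complex reals.
From mathcomp Require Import ring lra.
Set Implicit Arguments. Unset Strict Implicit. Unset Printing Implicit Defensive.
Import Order.TTheory GRing.Theory Num.Theory.
Local Open Scope ring_scope.

(* After multiplication by A1, the weighted dispersion relation at -oo becomes the complex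
   cubic y^3 + (mu - 1 - a mu^2) y + a eta^2 (y + 1) = 0, where a = F^-2, mu = muL + i k and
   y = lambda - mu (s - 1) + 1; thus Re lambda > 0 iff Re y > 1 - muL (s - 1).  Write
   y = x + i b, k = kap b, c = 1 - 2 a muL and A = F^2 c^2 / 4.  The real and imaginary parts
   of the cubic amount to a eta^2 = (x^2 + b^2) (2x + c kap) together with a "balance"
   equation whose terms are all positive once 2x >= 1 + A, so there are no roots there, for
   any (k, eta).  Just below that threshold (below sqrt A when A >= 1) the balance equation
   can instead be solved with b, hence k^2 + eta^2, arbitrarily large.  Finally
   F^2 (A - 1 + 2 muL (s - 1)) = (muL - m0)^2 - (F / F_2d)^2 (F_2d^2 - F^2), which is positive
   when F > F_2d and negative for muL in the window (m0 - r, m0 + r) when F < F_2d. *)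

Lemma det_mx3 (T : comNzRingType) (A : 'M[T]_3) :
  \det A = A 0 0 * (A 1 1 * A 2%:R 2%:R - A 1 2%:R * A 2%:R 1)
         - A 0 1 * (A 1 0 * A 2%:R 2%:R - A 1 2%:R * A 2%:R 0)
         + A 0 2%:R * (A 1 0 * A 2%:R 1 - A 1 1 * A 2%:R 0).
Proof.
rewrite (expand_det_row _ 0) !big_ord_recr big_ord0 /= add0r.
rewrite /cofactor !(expand_det_row _ 0) !big_ord_recr !big_ord0 /= !add0r.
rewrite /cofactor !det_mx11 !mxE /=.
(* The expansion produces equal ordinals with different proofs; reindexing through
   [inord] identifies them. *)
pose B (i j : nat) := A (inord i) (inord j).
have -> : A = \matrix_(i, j) B i j by apply/matrixP => i j; rewrite !mxE /B !inord_val.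
rewrite !mxE /= !expr0 ?expr1 ?expr2 /=; ring.
Qed.

Section CubicSystem.
Variable R : realFieldType.
Implicit Types a c Q k E x b kap : R.

(* Real and imaginary parts of y^3 + (mu - 1 - a mu^2) y + a E (y + 1) at y = x + i b and
   mu = m + i k, with c = 1 - 2 a m and Q = m - 1 - a m^2. *)
Definition cubic_re a c Q k E x b : R :=
  x ^+ 3 - 3 * x * b ^+ 2 + (Q + a * k ^+ 2) * x - c * k * b + a * E * (x + 1).

Definition cubic_im a c Q k E x b : R :=
  (3 * x ^+ 2 - b ^+ 2 + Q + a * k ^+ 2 + a * E) * b + c * k * x.

Definition balance a c Q x b kap : R :=
  b ^+ 2 * (a * kap ^+ 2 + c * kap + 2 * x - 1) + (Q + x ^+ 2 + x * (x + 1) * (2 * x + c * kap)).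

Lemma cubic_re_balance a c Q kap E x b :
  cubic_re a c Q (kap * b) E x b = x * balance a c Q x b kap
    + (x + 1) * (a * E - (x ^+ 2 + b ^+ 2) * (2 * x + c * kap)).
Proof. by rewrite /cubic_re /balance; ring. Qed.

Lemma cubic_im_balance a c Q kap E x b :
  cubic_im a c Q (kap * b) E x b = b * (balance a c Q x b kap
    + (a * E - (x ^+ 2 + b ^+ 2) * (2 * x + c * kap))).
Proof. by rewrite /cubic_im /balance; ring. Qed.

Lemma amgm_le_sqr [A x : R] : 0 <= A -> 1 + A <= 2 * x -> A <= x ^+ 2.
Proof.
move=> A_ge0 x_ge; have sq_le : (1 + A) ^+ 2 <= (2 * x) ^+ 2 by rewrite lerXn2r ?nnegrE //; lra.
by have := sqr_ge0 (1 - A); lra.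
Qed.

Variables a c Q A : R.
(* [lra] does not see section hypotheses: they are copied into the context when needed. *)
Hypotheses (a_gt0 : 0 < a) (cA : c ^+ 2 = 4 * a * A) (QA_gt0 : 0 < Q + A).

Lemma discr_ge0 : 0 <= A.
Proof. by have := sqr_ge0 c; rewrite cA pmulr_rge0 // mulr_gt0. Qed.

Lemma quad_ge0 kap : 0 <= a * kap ^+ 2 + c * kap + A.
Proof.
have : (2 * a * kap + c) ^+ 2 = 4 * a * (a * kap ^+ 2 + c * kap) + c ^+ 2 by ring.
rewrite cA -mulrDr => sqrE.
by have := sqr_ge0 (2 * a * kap + c); rewrite sqrE pmulr_rge0 // mulr_gt0.
Qed.

Lemma balance_gt0 x b kap :
  1 + A <= 2 * x -> 0 <= 2 * x + c * kap -> 0 < balance a c Q x b kap.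
Proof.
move=> x_ge slope_ge0; have A_ge0 := discr_ge0; have quad := quad_ge0 kap.
have coef_ge0 : 0 <= b ^+ 2 * (a * kap ^+ 2 + c * kap + 2 * x - 1).
  by rewrite mulr_ge0 ?sqr_ge0 //; lra.
have slope_term_ge0 : 0 <= x * (x + 1) * (2 * x + c * kap) by rewrite !mulr_ge0 //; lra.
have A_le_x2 := amgm_le_sqr A_ge0 x_ge.
have := QA_gt0; rewrite /balance; lra.
Qed.

Lemma cubic_root_re_lt k E x b : 0 <= E ->
  cubic_re a c Q k E x b = 0 -> cubic_im a c Q k E x b = 0 -> 2 * x < 1 + A.
Proof.
move=> E_ge0 re0 im0; rewrite ltNge; apply/negP => x_ge.
have A_ge0 := discr_ge0; have x_gt0 : 0 < x by lra.
have aE_ge0 : 0 <= a * E by rewrite mulr_ge0 // ltW.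
have [b0 | b_neq0] := eqVneq b 0.
  have k_term_ge0 : 0 <= a * (k ^+ 2 * x) := mulr_ge0 (ltW a_gt0) (mulr_ge0 (sqr_ge0 k) (ltW x_gt0)).
  have E_term_ge0 : 0 <= a * E * (x + 1) by rewrite mulr_ge0 //; lra.
  have A_le_x2 := amgm_le_sqr A_ge0 x_ge.
  have Q_term_gt0 : 0 < x * (Q + x ^+ 2) by rewrite mulr_gt0 //; have := QA_gt0; lra.
  by move: re0; rewrite /cubic_re b0; lra.
move: re0 im0; rewrite -[k](divfK b_neq0) cubic_re_balance cubic_im_balance.
set N := balance _ _ _ _ _ _; set D := a * E - _.
move=> re0 /eqP; rewrite mulf_eq0 (negbTE b_neq0) /= => /eqP im0.
have D0 : D = 0 by nra.
have slope_ge0 : 0 <= 2 * x + c * (k / b).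
  have : 0 < x ^+ 2 + b ^+ 2 by nra.
  move: D0; rewrite /D; nra.
have N_gt0 : 0 < N := balance_gt0 b x_ge slope_ge0.
lra.
Qed.

End CubicSystem.

Lemma ex_gt0_lbound4 (R : realDomainType) (u1 u2 u3 u4 : R) :
  0 < u1 -> 0 < u2 -> 0 < u3 -> 0 < u4 ->
  exists2 e, 0 < e & [/\ e <= u1, e <= u2, e <= u3 & e <= u4].
Proof.
move=> u1_gt0 u2_gt0 u3_gt0 u4_gt0.
exists (Num.min (Num.min u1 u2) (Num.min u3 u4)).
  by rewrite !lt_min u1_gt0 u2_gt0 u3_gt0 u4_gt0.
by split; rewrite !ge_min lexx ?orbT.
Qed.

Section CubicRoots.
Variable R : rcfType.
Variables a c Q A : R.
Hypotheses (a_gt0 : 0 < a) (cA : c ^+ 2 = 4 * a * A) (QA_gt0 : 0 < Q + A).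

Definition far_root (theta Rr : R) : Prop :=
  exists x b k E, [/\ 0 <= E, theta < x, Rr <= k ^+ 2 + E,
    cubic_re a c Q k E x b = 0 & cubic_im a c Q k E x b = 0].

Lemma far_root_of_balance (theta Rr x b kap : R) :
  balance a c Q x b kap = 0 -> 0 <= 2 * x + c * kap -> theta < x ->
  a * Rr <= a * (kap * b) ^+ 2 + (x ^+ 2 + b ^+ 2) * (2 * x + c * kap) ->
  far_root theta Rr.
Proof.
move=> N0 slope_ge0 x_gt Rr_le.
set E := (x ^+ 2 + b ^+ 2) * (2 * x + c * kap) / a.
have aE : a * E = (x ^+ 2 + b ^+ 2) * (2 * x + c * kap) by rewrite mulrC divfK ?gt_eqF.
exists x, b, (kap * b), E; split => //.
- exact: divr_ge0 (mulr_ge0 (addr_ge0 (sqr_ge0 x) (sqr_ge0 b)) slope_ge0) (ltW a_gt0).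
- by rewrite -(ler_pM2l a_gt0) mulrDr aE.
- by rewrite cubic_re_balance N0 aE subrr !mulr0 addr0.
- by rewrite cubic_im_balance N0 aE subrr addr0 mulr0.
Qed.

Lemma far_root_of_slope (theta Rr x kap w : R) :
  let M := Q + x ^+ 2 + x * (x + 1) * (2 * x + c * kap) in
  0 < w -> a * kap ^+ 2 + c * kap + 2 * x - 1 = - w -> 0 <= M ->
  0 <= 2 * x + c * kap -> theta < x ->
  a * Rr * w <= M * (a * kap ^+ 2 + (2 * x + c * kap)) -> far_root theta Rr.
Proof.
move=> M w_gt0 coefE M_ge0 slope_ge0 x_gt Rr_le.
set b := Num.sqrt (M / w); have b2 : b ^+ 2 = M / w by rewrite sqr_sqrtr // divr_ge0 // ltW.
apply: (@far_root_of_balance _ _ x b kap) => //.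
  by rewrite /balance coefE b2 -/M; field; rewrite gt_eqF.
rewrite -(ler_pM2r w_gt0) (le_trans Rr_le) //.
have -> : M = b ^+ 2 * w by rewrite b2 divfK ?gt_eqF.
have := mulr_ge0 (mulr_ge0 (sqr_ge0 x) slope_ge0) (ltW w_gt0).
by rewrite exprMn; lra.
Qed.

Lemma far_root_small (theta Rr : R) : A < 1 -> 2 * theta - 1 < A -> 0 < Rr -> far_root theta Rr.
Proof.
move=> A_lt1 theta_lt Rr_gt0; have A_ge0 := discr_ge0 a_gt0 cA; have QA_gt0' := QA_gt0.
have [e e_gt0 [e_le1 e_le2 e_le3 e_le4]] := @ex_gt0_lbound4 R ((1 + A - 2 * theta) / 2)
  ((1 - A) / 2) ((Q + A) / 2) ((Q + A) / (4 * a * Rr))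
  ltac:(lra) ltac:(lra) ltac:(lra) ltac:(by rewrite divr_gt0 ?mulr_gt0).
have AE : A = c ^+ 2 / (4 * a) by rewrite cA mulrC mulKf // mulf_neq0 // gt_eqF.
(* kap minimizes a kap^2 + c kap, and this x makes -e the coefficient of b^2 in the balance. *)
set x := (1 + A - e) / 2; have xE : 2 * x = 1 + A - e by rewrite /x; field.
set kap := - c / (2 * a).
have c_kap : c * kap = - 2 * A by rewrite AE /kap; field; rewrite gt_eqF.
have a_kap : a * kap ^+ 2 = A by rewrite AE /kap; field; rewrite gt_eqF.
have x2_ge : A - e <= x ^+ 2.
  have -> : x ^+ 2 = A - e + ((1 - A) / 2) ^+ 2 + e * (1 - A) / 2 + e ^+ 2 / 4 by rewrite /x; field.
  have : 0 <= e * (1 - A) / 2 by rewrite divr_ge0 // mulr_ge0 //; lra.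
  by have := sqr_ge0 ((1 - A) / 2); have := sqr_ge0 e; lra.
have slope_ge0 : 0 <= x * (x + 1) * (2 * x + - 2 * A) by rewrite !mulr_ge0 //; lra.
apply: (@far_root_of_slope _ _ x kap e) => //; rewrite ?a_kap ?c_kap; try lra.
have : a * Rr * e <= (Q + A) / 4 by move: e_le4; rewrite ler_pdivlMr ?mulr_gt0 //; lra.
have : (Q + A) / 2 * (1 / 2) <= (Q + x ^+ 2 + x * (x + 1) * (2 * x + - 2 * A)) * (A + (2 * x + - 2 * A)).
  by rewrite ler_pM //; lra.
lra.
Qed.

Lemma far_root_large (theta Rr : R) :
  1 <= A -> theta < Num.sqrt A -> 0 < Rr -> far_root theta Rr.
Proof.
move=> A_ge1 theta_lt Rr_gt0; have QA_gt0' := QA_gt0.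
set s := Num.sqrt A in theta_lt *; have s2 : s ^+ 2 = A by rewrite sqr_sqrtr // (le_trans ler01).
have s_ge1 : 1 <= s by rewrite /s -sqrtr1 ler_sqrt // (le_trans ler01).
have c_neq0 : c != 0 by rewrite -sqrf_eq0 cA !mulf_neq0 ?gt_eqF //; lra.
have [t t_gt0 [t_le1 t_le2 t_le3 t_le4]] := @ex_gt0_lbound4 R (s / 2) ((Q + A) / (4 * s))
  ((s - theta) / 2) ((Q + A) / (16 * a * Rr))
  ltac:(lra) ltac:(by rewrite divr_gt0 //; lra) ltac:(lra) ltac:(by rewrite divr_gt0 ?mulr_gt0).
have AE : A = c ^+ 2 / (4 * a) by rewrite cA mulrC mulKf // mulf_neq0 // gt_eqF.
(* kap cancels the slope 2x + c kap, so eta = 0, and b^2 = (Q + x^2) / (1 - u) blows up as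
   x tends to sqrt A. *)
set x := s - t; have xE : x = s - t by [].
set kap := - (2 * x / c); set u := a * kap ^+ 2.
have c_kap : c * kap = - 2 * x by rewrite /kap; field.
have uA : u * A = x ^+ 2 by rewrite AE /u /kap; field; rewrite c_neq0 gt_eqF.
have Ax2 : (1 - u) * A = t * (2 * s - t) by rewrite mulrBl uA mul1r -{1}s2 /x; ring.
have u_lt1 : u < 1.
  have : 0 < (1 - u) * A by rewrite Ax2 mulr_gt0 //; lra.
  by rewrite pmulr_lgt0 ?subr_gt0 //; lra.
have u_ge : 1 / 4 <= u.
  have : A / 4 <= u * A by rewrite uA -s2 /x; nra.
  by rewrite -(ler_pM2r (lt_le_trans ltr01 A_ge1)); lra.
have u_le : 1 - u <= 2 * t.
  have : (1 - u) * s <= 2 * t.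
    by rewrite -(ler_pM2r (_ : 0 < s)) -?mulrA -?expr2 ?s2 ?Ax2; nra.
  by nra.
have M_ge : (Q + A) / 2 <= Q + x ^+ 2 by rewrite /x -s2; move: t_le2; rewrite ler_pdivlMr; nra.
apply: (@far_root_of_slope _ _ x kap (1 - u)); rewrite ?c_kap -/u; try lra.
have : a * Rr * (2 * t) <= (Q + A) / 8 by move: t_le4; rewrite ler_pdivlMr ?mulr_gt0 //; lra.
have : a * Rr * (1 - u) <= a * Rr * (2 * t) by rewrite ler_wpM2l // mulr_ge0 // ltW.
have : (Q + A) / 2 * (1 / 4) <= (Q + x ^+ 2 + x * (x + 1) * (2 * x + -2 * x)) * (u + (2 * x + -2 * x)).
  by rewrite ler_pM //; lra.
lra.
Qed.

Lemma far_root_exists (theta Rr : R) :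
  theta <= 1 -> 2 * theta - 1 < A -> 0 < Rr -> far_root theta Rr.
Proof.
move=> theta_le1 theta_lt Rr_gt0.
have [A_lt1 | A_ge1] := ltP A 1; first exact: far_root_small.
apply: far_root_large => //.
have s2 : Num.sqrt A ^+ 2 = A by rewrite sqr_sqrtr // (le_trans ler01).
have := sqrtr_ge0 A; nra.
Qed.

End CubicRoots.

Section DispersionCubic.
Local Open Scope complex_scope.
Variable R : rcfType.

Definition disp_cubic (a : R) (mu : R[i]) (eta : R) (y : R[i]) : R[i] :=
  y ^+ 3 + (mu - 1 - a%:C * mu ^+ 2) * y + (a * eta ^+ 2)%:C * (y + 1).

Lemma mu_complexE (m k : R) : 'i * k%:C + m%:C = m +i* k.
Proof. by rewrite [RHS]complexE /= addrC. Qed.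

Lemma Re_complex (r s : R) : Re (r +i* s) = r%:C.
Proof. by rewrite ReE -ReJ_add. Qed.

Lemma disp_cubicE (a m k eta x b : R) :
  disp_cubic a (m +i* k) eta (x +i* b) =
  cubic_re a (1 - 2 * a * m) (m - 1 - a * m ^+ 2) k (eta ^+ 2) x b
  +i* cubic_im a (1 - 2 * a * m) (m - 1 - a * m ^+ 2) k (eta ^+ 2) x b.
Proof.
rewrite /disp_cubic -!complexr0 -[1 : R[i]]/(1 +i* 0) !exprS expr0 !mulr1.
by simpc; congr (_ +i* _); rewrite /cubic_re /cubic_im; ring.
Qed.

End DispersionCubic.

Section Reduction.
Local Open Scope complex_scope.
Variable R : realType.

Lemma det_shifted_pencil nu F (lam mu : R[i]) eta :
  \det (cmx (@E0 R) - lam%:M - ('i * eta%:C) *: cmx (A2 F) - mu *: cmx (A1 nu F))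
  = - disp_cubic (F ^-2) mu eta (lam - mu * (s_of nu - 1)%:C + 1).
Proof.
set M := (X in \det X).
have ME i j : M i j = (@E0 R i j)%:C - lam *+ (i == j) - 'i * eta%:C * (A2 F i j)%:C
                      - mu * (A1 nu F i j)%:C by rewrite !mxE.
rewrite det_mx3 !ME /E0 /E_HQ /A1 /A1_HQ /A2 /A2_HQ /mx3 !mxE /=.
rewrite /disp_cubic !expr1n !divr1 !mulr1 !mulr1n !mulr0n div1r.
have -> : (F ^-2 * eta ^+ 2)%:C = - ('i * eta%:C) ^+ 2 * (F ^-2)%:C.
  by rewrite exprMn sqr_i rmorphM rmorphXn; ring.
rewrite !rmorphB !rmorphN !rmorphD /=; ring.
Qed.

Lemma s_of_sub1 (nu : R) : 0 < nu -> s_of nu - 1 = (F_exist nu)^-1.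
Proof. by move=> nu_gt0; rewrite /s_of /F_exist; field; rewrite !gt_eqF ?addr_gt0. Qed.

Lemma det_A1 (nu F : R) :
  \det (A1 nu F) = (1 - s_of nu) * ((s_of nu - 1) ^+ 2 - F ^-2).
Proof.
rewrite det_mx3 /A1 /A1_HQ /mx3 !mxE /= !expr1n !divr1 !mulr1 div1r; ring.
Qed.

Lemma A1_unitmx (nu F : R) : 0 < nu -> 0 < F < F_exist nu -> cmx (A1 nu F) \in unitmx.
Proof.
move=> nu_gt0 /andP[F_gt0 F_lt]; rewrite map_unitmx unitmxE unitfE det_A1.
have Fe_gt0 : 0 < F_exist nu by apply: lt_trans F_lt.
have -> : 1 - s_of nu = - (s_of nu - 1) by ring.
rewrite s_of_sub1 // exprVn mulf_neq0 //; first by rewrite oppr_eq0 invr_eq0 gt_eqF.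
by rewrite lt_eqF // subr_lt0 ltf_pV2 ?posrE ?exprn_gt0 // ltrXn2r // ltW.
Qed.

Lemma disp_rootE nu F mL k eta (lam : R[i]) : cmx (A1 nu F) \in unitmx ->
  disp_root nu F mL k eta lam <->
  disp_cubic (F ^-2) ('i * k%:C + mL%:C) eta
    (lam - ('i * k%:C + mL%:C) * (s_of nu - 1)%:C + 1) = 0.
Proof.
move=> A1_unit; rewrite /disp_root /Gminf.
set mu := 'i * k%:C + mL%:C.
have -> : (cmx (@E0 R) - lam%:M - ('i * eta%:C) *: cmx (A2 F)) *m invmx (cmx (A1 nu F))
           - mu%:M
         = (cmx (@E0 R) - lam%:M - ('i * eta%:C) *: cmx (A2 F) - mu *: cmx (A1 nu F))
           *m invmx (cmx (A1 nu F)).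
  by rewrite [RHS]mulmxBl -scalemxAl mulmxV // scalemx1.
rewrite det_mulmx det_inv det_shifted_pencil.
have detA1_neq0 : \det (cmx (A1 nu F)) != 0 by rewrite -unitfE -unitmxE.
split=> [/eqP | ->]; last by rewrite oppr0 mul0r.
by rewrite mulf_eq0 invr_eq0 (negbTE detA1_neq0) orbF oppr_eq0 => /eqP.
Qed.

Definition disp_c (F m : R) : R := 1 - 2 * F ^-2 * m.
Definition disp_Q (F m : R) : R := m - 1 - F ^-2 * m ^+ 2.
Definition disp_A (F m : R) : R := F ^+ 2 * disp_c F m ^+ 2 / 4.

Lemma disp_rootP (nu F m k eta : R) (lam : R[i]) : 0 < nu -> 0 < F < F_exist nu ->
  disp_root nu F m k eta lam <->
  exists x b, [/\ lam = (x + m * (s_of nu - 1) - 1) +i* (b + k * (s_of nu - 1)),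
    cubic_re (F ^-2) (disp_c F m) (disp_Q F m) k (eta ^+ 2) x b = 0 &
    cubic_im (F ^-2) (disp_c F m) (disp_Q F m) k (eta ^+ 2) x b = 0].
Proof.
move=> nu_gt0 F_bounds; rewrite disp_rootE ?A1_unitmx // mu_complexE.
set S := s_of nu - 1; case: lam => r s.
have -> : r +i* s - (m +i* k) * S%:C + 1 = (r - m * S + 1) +i* (s - k * S).
  by apply/eqP; rewrite eq_complex /=; apply/andP; split; apply/eqP; ring.
rewrite disp_cubicE; split=> [/eqP | [x [b [[-> ->] re0 im0]]]].
  rewrite eq_complex /= => /andP[/eqP re0 /eqP im0].
  by exists (r - m * S + 1), (s - k * S); split => //; congr (_ +i* _); ring.
have -> : x + m * S - 1 - m * S + 1 = x by ring.
have -> : b + k * S - k * S = b by ring.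
by rewrite re0 im0.
Qed.

End Reduction.

Section Froude.
Local Open Scope complex_scope.
Variable R : realType.

Lemma F_exist_gt2 (nu : R) : 1 < nu -> 2 < F_exist nu.
Proof. by move=> nu_gt1; rewrite /F_exist; nra. Qed.

Lemma F_2d_sqr (nu : R) : 1 < nu -> F_2d nu ^+ 2 = F_exist nu ^+ 2 / (F_exist nu - 1).
Proof.
move=> nu_gt1; have D_gt0 : 0 < nu ^+ 2 + nu - 1 by nra.
rewrite /F_2d expr_div_n sqr_sqrtr ?ltW // /F_exist; congr (_ / _); ring.
Qed.

Lemma F_2d_bounds (nu : R) : 1 < nu -> 2 < F_2d nu < F_exist nu.
Proof.
move=> nu_gt1; have Fe_gt2 := F_exist_gt2 nu_gt1.
have F2d_gt0 : 0 < F_2d nu by rewrite divr_gt0 ?sqrtr_gt0 ?mulr_gt0; nra.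
have Fe1_gt0 : 0 < F_exist nu - 1 by lra.
apply/andP; split; rewrite -ltr_sqr ?nnegrE ?ltW // ?(lt_trans _ Fe_gt2) // F_2d_sqr //.
  by rewrite ltr_pdivlMr //; nra.
by rewrite ltr_pdivrMr // ltr_pMr ?exprn_gt0 //; lra.
Qed.

Lemma disp_coefs_admissible (F m : R) : 2 < F ->
  [/\ 0 < F ^-2, disp_c F m ^+ 2 = 4 * F ^-2 * disp_A F m & 0 < disp_Q F m + disp_A F m].
Proof.
move=> F_gt2; have F_neq0 : F != 0 by rewrite gt_eqF //; lra.
split; first by rewrite invr_gt0 exprn_gt0 //; lra.
  by rewrite /disp_A; field.
have -> : disp_Q F m + disp_A F m = F ^+ 2 / 4 - 1 by rewrite /disp_Q /disp_A /disp_c; field.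
nra.
Qed.

Definition window_center (nu F : R) : R := F ^+ 2 / 2 - F ^+ 2 / F_exist nu.
Definition window_radius (nu F : R) : R := F / F_2d nu * Num.sqrt (F_2d nu ^+ 2 - F ^+ 2).

Lemma disp_A_marginE (nu F m : R) : 1 < nu -> 0 < F ->
  F ^+ 2 * (disp_A F m - (1 - 2 * m * (s_of nu - 1)))
  = (m - window_center nu F) ^+ 2 - (F / F_2d nu) ^+ 2 * (F_2d nu ^+ 2 - F ^+ 2).
Proof.
move=> nu_gt1 F_gt0; have Fe_gt2 := F_exist_gt2 nu_gt1.
rewrite s_of_sub1 ?(lt_trans ltr01) // expr_div_n F_2d_sqr // /disp_A /disp_c /window_center.
by field; rewrite !gt_eqF //; lra.
Qed.

Lemma disp_A_gt_beyond_F_2d (nu F m : R) : 1 < nu -> F_2d nu < F ->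
  1 - 2 * m * (s_of nu - 1) < disp_A F m.
Proof.
move=> nu_gt1 F2d_lt_F; have /andP[F2d_gt2 _] := F_2d_bounds nu_gt1.
have F_gt0 : 0 < F by lra.
rewrite -subr_gt0 -(pmulr_rgt0 _ (exprn_gt0 2 F_gt0)) disp_A_marginE //.
have sq_lt : F_2d nu ^+ 2 < F ^+ 2 by rewrite ltr_sqr ?nnegrE; lra.
have : 0 < (F / F_2d nu) ^+ 2 * (F ^+ 2 - F_2d nu ^+ 2).
  by apply: mulr_gt0; [rewrite exprn_gt0 // divr_gt0 //; lra | rewrite subr_gt0].
by have := sqr_ge0 (m - window_center nu F); lra.
Qed.

Lemma window_radius_sqr (nu F : R) : 1 < nu -> 0 < F < F_2d nu ->
  window_radius nu F ^+ 2 = (F / F_2d nu) ^+ 2 * (F_2d nu ^+ 2 - F ^+ 2).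
Proof.
move=> nu_gt1 /andP[F_gt0 F_lt]; have /andP[F2d_gt2 _] := F_2d_bounds nu_gt1.
by rewrite exprMn sqr_sqrtr // subr_ge0 ltW // ltr_sqr ?nnegrE; lra.
Qed.

Lemma window_radius_lt_center (nu F : R) : 1 < nu -> 2 < F < F_2d nu ->
  window_radius nu F < window_center nu F.
Proof.
move=> nu_gt1 /andP[F_gt2 F_lt]; have /andP[F2d_gt2 F2d_lt] := F_2d_bounds nu_gt1.
have F_gt0 : 0 < F by lra.
have r2 := @window_radius_sqr nu F nu_gt1 ltac:(by apply/andP; split).
have F2d_gt0 : 0 < F_2d nu by lra.
have r_ge0 : 0 <= window_radius nu F :=
  mulr_ge0 (divr_ge0 (ltW F_gt0) (ltW F2d_gt0)) (sqrtr_ge0 _).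
have c_gt0 : 0 < window_center nu F.
  rewrite /window_center (_ : _ - _ = F ^+ 2 * (F_exist nu - 2) / (2 * F_exist nu)).
    by rewrite divr_gt0 ?mulr_gt0 ?exprn_gt0 //; lra.
  by field; lra.
have sqr_diff : window_center nu F ^+ 2 - window_radius nu F ^+ 2 = F ^+ 2 * (F ^+ 2 / 4 - 1).
  by move: (disp_A_marginE 0 nu_gt1 F_gt0); rewrite -r2 /disp_A /disp_c; lra.
have : 0 < F ^+ 2 * (F ^+ 2 / 4 - 1) by rewrite mulr_gt0 ?exprn_gt0 //; nra.
by rewrite -(ltr_sqr (x := window_radius nu F)) ?nnegrE ?(ltW c_gt0) //; lra.
Qed.

Lemma disp_A_lt_in_window (nu F m : R) : 1 < nu -> 2 < F < F_2d nu ->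
  window_center nu F - window_radius nu F < m < window_center nu F + window_radius nu F ->
  disp_A F m < 1 - 2 * m * (s_of nu - 1).
Proof.
move=> nu_gt1 /andP[F_gt2 F_lt] /andP[lo_lt lt_hi].
have F_gt0 : 0 < F by lra.
have r2 := @window_radius_sqr nu F nu_gt1 ltac:(by apply/andP; split).
rewrite -subr_lt0 -(pmulr_rlt0 _ (exprn_gt0 2 F_gt0)) disp_A_marginE // -r2 subr_lt0.
nra.
Qed.

Lemma disp_root_unstable (nu F m Rr : R) : 1 < nu -> 2 < F < F_exist nu -> 0 <= m ->
  1 - 2 * m * (s_of nu - 1) < disp_A F m -> 0 < Rr ->
  exists k eta, Rr <= k ^+ 2 + eta ^+ 2 /\
    exists lam, disp_root nu F m k eta lam /\ 0 < Re lam.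
Proof.
move=> nu_gt1 /andP[F_gt2 F_lt] m_ge0 A_gt Rr_gt0.
have [a_gt0 cA QA_gt0] := disp_coefs_admissible m F_gt2.
have nu_gt0 : 0 < nu by lra.
have S_gt0 : 0 < s_of nu - 1 by rewrite s_of_sub1 // invr_gt0; lra.
have [x [b [k [E [E_ge0 x_gt Rr_le re0 im0]]]]] :=
  far_root_exists a_gt0 cA QA_gt0 (theta := 1 - m * (s_of nu - 1)) ltac:(nra) ltac:(lra) Rr_gt0.
exists k, (Num.sqrt E); rewrite sqr_sqrtr //; split => //.
exists ((x + m * (s_of nu - 1) - 1) +i* (b + k * (s_of nu - 1))); split.
  apply/disp_rootP => //; first by apply/andP; split; lra.
  by exists x, b; rewrite sqr_sqrtr.
by rewrite Re_complex ltcR; lra.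
Qed.

Lemma disp_root_stable (nu F m k eta : R) (lam : R[i]) : 1 < nu -> 2 < F < F_exist nu ->
  disp_A F m < 1 - 2 * m * (s_of nu - 1) -> disp_root nu F m k eta lam -> Re lam < 0.
Proof.
move=> nu_gt1 /andP[F_gt2 F_lt] A_lt.
have [a_gt0 cA QA_gt0] := disp_coefs_admissible m F_gt2.
case/disp_rootP => [| | x [b [-> re0 im0]]]; [lra | by apply/andP; split; lra |].
have := cubic_root_re_lt a_gt0 cA QA_gt0 (sqr_ge0 eta) re0 im0.
by rewrite Re_complex ltcR; lra.
Qed.

End Froude.

Theorem mainTheorem5 (R : realType) (nu F : R) (hnu : 1 < nu) :
  (* (i) *)
  (F_2d nu < F < F_exist nu ->
     forall muL : R, 0 <= muL -> forall Rr : R, 0 < Rr ->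
       exists k eta : R, Rr <= k ^+ 2 + eta ^+ 2 /\
         exists lambda : R[i], disp_root nu F muL k eta lambda /\ 0 < Re lambda)
  /\
  (* (ii) *)
  (let lo := F ^+ 2 / 2 - F ^+ 2 / F_exist nu
             - F / F_2d nu * Num.sqrt (F_2d nu ^+ 2 - F ^+ 2) in
   let hi := F ^+ 2 / 2 - F ^+ 2 / F_exist nu
             + F / F_2d nu * Num.sqrt (F_2d nu ^+ 2 - F ^+ 2) in
   2 < F < F_2d nu -> forall muL : R, lo < muL < hi ->
     (forall x : R, lo < x < hi -> 0 < x) /\
     exists Rr : R, 0 < Rr /\
       forall k eta : R, Rr <= k ^+ 2 + eta ^+ 2 ->
         forall lambda : R[i], disp_root nu F muL k eta lambda -> Re lambda < 0).
Proof.
have /andP[F2d_gt2 F2d_lt] := F_2d_bounds hnu.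
split.
- move=> /andP[F2d_lt_F F_lt] m m_ge0 Rr Rr_gt0.
  apply: disp_root_unstable => //; last exact: disp_A_gt_beyond_F_2d.
  by apply/andP; split; lra.
- move=> lo hi; rewrite {}/lo {}/hi -/(window_center nu F) -/(window_radius nu F).
  move=> F_window m m_window; have := window_radius_lt_center hnu F_window.
  split=> [x /andP[lo_lt_x _] | ]; first by lra.
  exists 1; split=> // k eta _ lam; apply: disp_root_stable => //.
    by case/andP: F_window => *; apply/andP; split; lra.
  exact: disp_A_lt_in_window.
Qed.
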